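(* Let $p$ be a prime, $n$ a positive integer, and let $\widetilde T(n,\mathbf{Q}_p)$ be the group of upper-triangular invertible $n\times n$ matrices $A=\{a_{j,k}\}$ over $\mathbf{Q}_p$ with $|a_{j,j}|_p=1$ for all $j$. Let $N(A)=\max_{1\le j<k\le n}|a_{j,k}|_p^{1/(k-j)}$ and $D(A,A')=\max_j|a_{j,j}-a'_{j,j}|_p$. Then $N(AA')\le\max(N(A),N(A'))$ and $N(A^{-1})=N(A)$ for $A,A'\in\widetilde T(n,\mathbf{Q}_p)$; $N((A')^{-1}A)$ is a left-invariant and $N(A(A')^{-1})$ a right-invariant semi-ultrametric on $\widetilde T(n,\mathbf{Q}_p)$, both compatible with the topology induced from $M_n(\mathbf{Q}_p)$ and proper, so that $\widetilde T(n,\mathbf{Q}_p)$ has large compact open subgroups; $D$ is a semi-ultrametric invariant under both left and right translations; and $\max(N((A')^{-1}A),D(A,A'))$ (resp. $\max(N(A(A')^{-1}),D(A,A'))$) is a left-invariant (resp. right-invariant) ultrametric on $\widetilde T(n,\mathbf{Q}_p)$ determining its usual topology.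
   Context: A semi-ultrametric is a semimetric $d$ with $d(x,z)\le\max(d(x,y),d(y,z))$. A semimetric on a topological group is compatible if open balls are open, proper if closed bounded sets are compact. A topological group has large compact open subgroups if every compact set is contained in a compact open subgroup. *)

From HB Require Import structures.
From mathcomp Require Import all_boot all_order all_algebra.
From mathcomp Require Import reals exp.
Set Implicit Arguments. Unset Strict Implicit. Unset Printing Implicit Defensive.
Import Order.TTheory GRing.Theory Num.Theory.
Local Open Scope ring_scope.

(* The p-adic field Q_p, characterised up to isometric isomorphism as  *)
(* a complete valued field K (norm nrm : K -> R) containing Q densely, *)
(* whose norm restricts to the p-adic absolute value on Q.             *)

Definition padic_val (p : nat) (q : rat) : int :=
  Posz (logn p `|numq q|%N) - Posz (logn p `|denq q|%N).

Definition padic_abs (R : realType) (p : nat) (q : rat) : R :=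
  if q == 0 then 0 else (p%:R : R) ^ (- padic_val p q).

Definition is_Qp (p : nat) (R : realType) (K : fieldType) (nrm : K -> R) : Prop :=
  [/\ (forall x, 0 <= nrm x),
      (forall x, nrm x = 0 <-> x = 0),
      (forall x y, nrm (x * y) = nrm x * nrm y),
      (forall x y, nrm (x + y) <= Num.max (nrm x) (nrm y)) &
      (forall q : rat, nrm (ratr q) = padic_abs R p q)] /\
      (forall u : nat -> K,
          (forall e : R, 0 < e -> exists N, forall m k, (N <= m)%N -> (N <= k)%N ->
              nrm (u m - u k) < e) ->
          exists l, forall e : R, 0 < e -> exists N, forall m, (N <= m)%N ->
              nrm (u m - l) < e) /\
      (forall (x : K) (e : R), 0 < e -> exists q : rat, nrm (x - ratr q) < e).

Section Tn.
Variables (R : realType) (K : fieldType) (nrm : K -> R) (n : nat).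

Definition mset := 'M[K]_n -> Prop.

Definition Ttil : mset := fun A =>
  [/\ A \in unitmx,
      (forall j k : 'I_n, (k < j)%N -> A j k = 0) &
      (forall j : 'I_n, nrm (A j j) = 1)].

Definition Nfun (A : 'M[K]_n) : R :=
  \big[Num.max/0]_(j < n) \big[Num.max/0]_(k < n | (j < k)%N)
     powR (nrm (A j k)) ((k - j)%:R^-1).

Definition Dfun (A A' : 'M[K]_n) : R :=
  \big[Num.max/0]_(j < n) nrm (A j j - A' j j).

Definition dL (A A' : 'M[K]_n) : R := Nfun (invmx A' *m A).
Definition dR (A A' : 'M[K]_n) : R := Nfun (A *m invmx A').

(* sup-norm distance on M_n(Q_p); it induces the (product) topology of M_n(Q_p) *)
Definition mdist (A B : 'M[K]_n) : R :=
  \big[Num.max/0]_(i < n) \big[Num.max/0]_(j < n) nrm (A i j - B i j).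

Definition open_in (S U : mset) : Prop :=
  (forall A, U A -> S A) /\
  forall A, U A -> exists2 e : R, 0 < e &
     forall B, S B -> mdist A B < e -> U B.

Definition closed_in (S C : mset) : Prop :=
  (forall A, C A -> S A) /\ open_in S (fun A => S A /\ ~ C A).

Definition compact_in (S C : mset) : Prop :=
  (forall A, C A -> S A) /\
  forall (I : Type) (U : I -> mset),
    (forall i, open_in S (U i)) ->
    (forall A, C A -> exists i, U i A) ->
    exists (m : nat) (f : 'I_m -> I), forall A, C A -> exists j, U (f j) A.

Definition semi_ultrametric (S : mset) (d : 'M[K]_n -> 'M[K]_n -> R) : Prop :=
  forall x y z, S x -> S y -> S z ->
    [/\ 0 <= d x y, d x x = 0, d x y = d y x & d x z <= Num.max (d x y) (d y z)].

Definition ultrametric (S : mset) (d : 'M[K]_n -> 'M[K]_n -> R) : Prop :=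
  semi_ultrametric S d /\ forall x y, S x -> S y -> d x y = 0 -> x = y.

Definition left_invariant (S : mset) (d : 'M[K]_n -> 'M[K]_n -> R) : Prop :=
  forall g x y, S g -> S x -> S y -> d (g *m x) (g *m y) = d x y.

Definition right_invariant (S : mset) (d : 'M[K]_n -> 'M[K]_n -> R) : Prop :=
  forall g x y, S g -> S x -> S y -> d (x *m g) (y *m g) = d x y.

Definition dball (S : mset) (d : 'M[K]_n -> 'M[K]_n -> R) (x : 'M[K]_n) (r : R) : mset :=
  fun y => S y /\ d x y < r.

Definition compatible (S : mset) (d : 'M[K]_n -> 'M[K]_n -> R) : Prop :=
  forall x r, S x -> open_in S (dball S d x r).

Definition bounded (S : mset) (d : 'M[K]_n -> 'M[K]_n -> R) (C : mset) : Prop :=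
  exists x r, S x /\ forall y, C y -> dball S d x r y.

Definition proper_sm (S : mset) (d : 'M[K]_n -> 'M[K]_n -> R) : Prop :=
  forall C, closed_in S C -> bounded S d C -> compact_in S C.

Definition dopen (S : mset) (d : 'M[K]_n -> 'M[K]_n -> R) (U : mset) : Prop :=
  (forall A, U A -> S A) /\
  forall A, U A -> exists2 r : R, 0 < r & forall B, dball S d A r B -> U B.

Definition determines_topology (S : mset) (d : 'M[K]_n -> 'M[K]_n -> R) : Prop :=
  forall U, dopen S d U <-> open_in S U.

Definition subgroup_of (S H : mset) : Prop :=
  [/\ forall A, H A -> S A, H 1%:M,
      (forall A B, H A -> H B -> H (A *m B)) &
      (forall A, H A -> H (invmx A))].

Definition large_compact_open_subgroups (S : mset) : Prop :=
  forall C, compact_in S C ->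
    exists H, [/\ subgroup_of S H, open_in S H, compact_in S H &
                  forall A, C A -> H A].

End Tn.

Arguments Ttil {R K} nrm {n}.
Arguments Nfun {R K} nrm {n}.
Arguments Dfun {R K} nrm {n}.
Arguments dL {R K} nrm {n}.
Arguments dR {R K} nrm {n}.
Arguments mdist {R K} nrm {n}.
Arguments open_in {R K} nrm {n}.
Arguments closed_in {R K} nrm {n}.
Arguments compact_in {R K} nrm {n}.
Arguments compatible {R K} nrm {n}.
Arguments proper_sm {R K} nrm {n}.
Arguments determines_topology {R K} nrm {n}.
Arguments large_compact_open_subgroups {R K} nrm {n}.

(* [N] is an ultrametric length on the group: in [(A A')_jk = sum_l a_jl a'_lk]
   the exponents [l - j] and [k - l] add up to [k - j], and back-substitution
   gives the same bound for [A^-1].  An element of the group is close to [1] in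
   [M_n(Q_p)] iff its off-diagonal entries are small ([N] small) and its diagonal
   is close to [1] ([D] small); translating by [A] gives compatibility of the
   semimetrics, and shows that adding [D] recovers the usual topology.  A set
   bounded for [N((A')^-1 A)] or [N(A (A')^-1)] has bounded entries, and a closed
   set with bounded entries is compact: a ball of radius [r] is covered by
   [p ^ (n * n)] balls of radius [r / p] (residues mod [p]), and nested balls that
   are not finitely covered shrink, by completeness, to a point of the set.  The
   compact open subgroups [{N <= M}] then exhaust the group. *)

From HB Require Import structures.
From mathcomp Require Import all_boot all_order all_algebra.
From mathcomp Require Import reals exp.
From mathcomp Require Import ring lra zify.
From Stdlib Require Classical_Prop ClassicalEpsilon.
Import Order.TTheory GRing.Theory Num.Theory.
Local Open Scope ring_scope.
Set Implicit Arguments. Unset Strict Implicit. Unset Printing Implicit Defensive.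

Lemma powR_invn_le (R : realType) (x M : R) (m : nat) :
  0 <= x -> 0 <= M -> (0 < m)%N -> (powR x m%:R^-1 <= M) = (x <= M ^+ m).
Proof.
move=> x0 M0 m0; have m0R : m%:R != 0 :> R by rewrite pnatr_eq0 -lt0n.
apply/idP/idP => h.
  rewrite -[x](_ : powR x m%:R^-1 ^+ m = x).
    by apply: lerXn2r => //; rewrite nnegrE powR_ge0.
  by rewrite -powR_mulrn ?powR_ge0 // -powRrM mulVf // powRr1.
rewrite -[M](_ : powR (M ^+ m) m%:R^-1 = M).
  by apply: ge0_ler_powR; rewrite ?nnegrE ?invr_ge0 ?ler0n ?exprn_ge0.
by rewrite -powR_mulrn // -powRrM mulfV // powRr1.
Qed.

Lemma le_max_eps (R : realType) (a b : R) : 0 <= b ->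
  (forall e, 0 < e -> a <= Num.max b e) -> a <= b.
Proof.
move=> b0 h; rewrite leNgt; apply/negP => ab.
have e0 : 0 < (a + b) / 2 by apply: divr_gt0; lra.
by have := h _ e0; rewrite le_max => /orP[]; lra.
Qed.

Lemma dependent_choice (T : Type) (P : nat -> T -> Prop)
    (Q : nat -> T -> T -> Prop) x0 :
  P 0%N x0 -> (forall k x, P k x -> exists2 y, P k.+1 y & Q k x y) ->
  exists u : nat -> T, forall k, P k (u k) /\ Q k (u k) (u k.+1).
Proof.
move=> P0 PS.
have next k x : P k x -> {y | P k.+1 y /\ Q k x y}.
  move=> /PS hx; apply: ClassicalEpsilon.constructive_indefinite_description.
  by have [y] := hx; exists y.
pose v := fix v (k : nat) : {x | P k x} :=
  match k with
  | 0%N => exist _ x0 P0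
  | k'.+1 => exist _ _ (proj1 (svalP (next k' _ (svalP (v k')))))
  end.
exists (fun k => sval (v k)) => k; split; first exact: svalP.
exact: proj2 (svalP (next k _ (svalP (v k)))).
Qed.

Lemma invmxM (F : comUnitRingType) (n : nat) (A B : 'M[F]_n) :
  A \in unitmx -> B \in unitmx -> invmx (A *m B) = invmx B *m invmx A.
Proof.
move=> uA uB; have uAB : A *m B \in unitmx by rewrite unitmx_mul uA uB.
rewrite -[RHS]mul1mx -(mulVmx uAB) -!mulmxA (mulmxA B) mulmxV // mul1mx.
by rewrite mulmxV // mulmx1.
Qed.

Lemma mulVmx_sub1 (F : comUnitRingType) (n : nat) (A B : 'M[F]_n) :
  A \in unitmx -> invmx A *m B - 1%:M = invmx A *m (B - A).
Proof. by move=> uA; rewrite mulmxBr mulVmx. Qed.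

Lemma mulmxV_sub1 (F : comUnitRingType) (n : nat) (A B : 'M[F]_n) :
  A \in unitmx -> B *m invmx A - 1%:M = (B - A) *m invmx A.
Proof. by move=> uA; rewrite mulmxBl mulmxV. Qed.

Section UpperTriangular.
Variables (F : fieldType) (n : nat).

Definition upper (A : 'M[F]_n) := forall j k : 'I_n, (k < j)%N -> A j k = 0.

Lemma upper1 : upper 1%:M.
Proof. by move=> j k kj; rewrite mxE -val_eqE gtn_eqF. Qed.

Lemma mulmx_upper A B : upper A -> upper B -> upper (A *m B).
Proof.
move=> uA uB j k kj; rewrite mxE big1 // => l _.
case: (ltnP l j) => lj; first by rewrite uA // mul0r.
by rewrite uB ?mulr0 // (leq_trans kj lj).
Qed.

Lemma mulmx_upper_diag A B j : upper A -> upper B ->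
  (A *m B) j j = A j j * B j j.
Proof.
move=> uA uB; rewrite mxE (bigD1 j) //= big1 ?addr0 // => l lj.
case: (ltngtP l j) => [lj'|jl|/val_inj el]; last by rewrite el eqxx in lj.
  by rewrite uA // mul0r.
by rewrite uB // mulr0.
Qed.

Lemma unitmx_upper A : upper A -> (forall j, A j j != 0) -> A \in unitmx.
Proof.
move=> uA dA; rewrite unitmxE -det_tr det_trig.
  by rewrite unitfE; apply/prodf_neq0 => j _; rewrite mxE.
by apply/is_trig_mxP => j k jk; rewrite mxE uA.
Qed.

(* Back-substitution: the entries of the inverse below the diagonal vanish
   column by column, from left to right. *)
Lemma invmx_upper A : A \in unitmx -> upper A -> (forall j, A j j != 0) ->
  upper (invmx A).
Proof.
move=> uA hA dA j.
suff low m (k : 'I_n) : (k <= m)%N -> (k < j)%N -> invmx A j k = 0.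
  by move=> k; apply: low.
elim: m k => [|m IH] k km kj;
  have := congr1 (fun M : 'M_n => M j k) (mulVmx uA);
  rewrite !mxE -val_eqE gtn_eqF // (bigD1 k) //= big1 ?addr0 => [/eqP|l lk];
  try by rewrite mulf_eq0 (negPf (dA k)) orbF => /eqP.
all: case: (ltngtP l k) => [lk'|kl|/val_inj e];
  [|by rewrite hA ?mulr0|by rewrite e eqxx in lk].
- by move: km; rewrite leqn0 => /eqP k0; rewrite k0 in lk'.
- by rewrite IH ?mul0r ?(ltn_trans lk' kj) // -ltnS (leq_trans lk').
Qed.

Lemma invmx_upper_diag A j : A \in unitmx -> upper A -> (forall j, A j j != 0) ->
  invmx A j j = (A j j)^-1.
Proof.
move=> uA hA dA; apply: (mulfI (dA j)); rewrite mulfV //.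
by rewrite -mulmx_upper_diag ?mulmxV ?mxE ?eqxx //; apply: invmx_upper.
Qed.

End UpperTriangular.

Section FiniteCovers.
Variables (T I : Type) (U : I -> T -> Prop).

Definition fcover (X : T -> Prop) :=
  exists (m : nat) (f : 'I_m -> I), forall x, X x -> exists j, U (f j) x.

Lemma fcover_sub (X Y : T -> Prop) :
  (forall x, X x -> Y x) -> fcover Y -> fcover X.
Proof. by move=> XY [m [f hf]]; exists m, f => x /XY /hf. Qed.

Lemma fcover0 (X : T -> Prop) : (forall x, ~ X x) -> fcover X.
Proof.
move=> X0; exists 0%N.
exists (fun j : 'I_0 => let: Ordinal _ j0 := j in False_rect I (Bool.diff_false_true j0)).
by move=> x /X0.
Qed.

Lemma fcoverU (X Y : T -> Prop) : fcover X -> fcover Y -> fcover (fun x => X x \/ Y x).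
Proof.
move=> [m1 [f1 h1]] [m2 [f2 h2]]; exists (m1 + m2)%N.
exists (fun j => match split j with inl a => f1 a | inr b => f2 b end).
move=> x [/h1 [j hj]|/h2 [j hj]].
  by exists (unsplit (inl j)); rewrite unsplitK.
by exists (unsplit (inr j)); rewrite unsplitK.
Qed.

Lemma fcover_bigcup (V : eqType) (s : seq V) (X : V -> T -> Prop) :
  (forall v, v \in s -> fcover (X v)) ->
  fcover (fun x => exists2 v, v \in s & X v x).
Proof.
elim: s => [|v s IH] h; first by apply: fcover0 => x [].
apply: (@fcover_sub _ (fun x => X v x \/ exists2 v, v \in s & X v x)).
  by move=> x [v']; rewrite inE => /orP[/eqP->|vs]; [left|right; exists v'].
apply: fcoverU; first by apply: h; rewrite mem_head.
by apply: IH => v' vs; apply: h; rewrite inE vs orbT.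
Qed.

End FiniteCovers.

Definition nonarch_abs (R : realType) (K : fieldType) (nrm : K -> R) : Prop :=
  [/\ forall x, 0 <= nrm x, forall x, nrm x = 0 <-> x = 0,
      forall x y, nrm (x * y) = nrm x * nrm y &
      forall x y, nrm (x + y) <= Num.max (nrm x) (nrm y)].

Lemma is_Qp_nonarch p (R : realType) (K : fieldType) (nrm : K -> R) :
  is_Qp p nrm -> nonarch_abs nrm.
Proof. by case=> -[]. Qed.

Section NonArchimedean.
Variables (R : realType) (K : fieldType) (nrm : K -> R).
Hypothesis nrmP : nonarch_abs nrm.

Lemma nrm_ge0 x : 0 <= nrm x. Proof. by case: nrmP. Qed.
Lemma nrm_eq0 x : nrm x = 0 <-> x = 0. Proof. by case: nrmP. Qed.
Lemma nrmM x y : nrm (x * y) = nrm x * nrm y. Proof. by case: nrmP. Qed.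
Lemma nrm_ultra x y : nrm (x + y) <= Num.max (nrm x) (nrm y).
Proof. by case: nrmP. Qed.

Lemma nrm0 : nrm 0 = 0.
Proof. exact/nrm_eq0. Qed.

Lemma nrm_gt0 x : x != 0 -> 0 < nrm x.
Proof.
by move=> x0; rewrite lt_def nrm_ge0 andbT; apply: contraNneq x0 => /nrm_eq0->.
Qed.

Lemma nrm1 : nrm 1 = 1.
Proof.
have n10 : nrm 1 != 0 by rewrite gt_eqF ?nrm_gt0 ?oner_neq0.
by apply: (mulfI n10); rewrite -nrmM !mulr1.
Qed.

Lemma nrmN x : nrm (- x) = nrm x.
Proof.
have nN1 : nrm (-1) = 1.
  have := nrmM (-1) (-1); rewrite mulrNN mulr1 nrm1.
  by have := nrm_ge0 (-1); nra.
by rewrite -mulN1r nrmM nN1 mul1r.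
Qed.

Lemma nrm_distC x y : nrm (x - y) = nrm (y - x).
Proof. by rewrite -nrmN opprB. Qed.

Lemma nrmX x k : nrm (x ^+ k) = nrm x ^+ k.
Proof. by elim: k => [|k IH]; rewrite ?nrm1 // !exprS nrmM IH. Qed.

Lemma nrmV x : nrm x^-1 = (nrm x)^-1.
Proof.
have [->|x0] := eqVneq x 0; first by rewrite invr0 nrm0 invr0.
apply: (mulfI (lt0r_neq0 (nrm_gt0 x0))).
by rewrite -nrmM !mulfV ?nrm1 // gt_eqF // nrm_gt0.
Qed.

Lemma nrmD_le x y M : nrm x <= M -> nrm y <= M -> nrm (x + y) <= M.
Proof. by move=> hx hy; apply: le_trans (nrm_ultra x y) _; rewrite ge_max hx. Qed.

Lemma nrm_sum_le (I : Type) (r : seq I) (P : pred I) (F : I -> K) M :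
  0 <= M -> (forall i, P i -> nrm (F i) <= M) -> nrm (\sum_(i <- r | P i) F i) <= M.
Proof.
move=> M0 h; elim/big_ind: _ => //; first by rewrite nrm0.
by move=> x y; apply: nrmD_le.
Qed.

Lemma nrm_natr_le1 k : nrm k%:R <= 1.
Proof.
elim: k => [|k IH]; first by rewrite nrm0.
by rewrite -addn1 natrD; apply: nrmD_le; rewrite ?nrm1.
Qed.

Lemma nrm_intr_le1 (z : int) : nrm z%:~R <= 1.
Proof. by case: z => k; rewrite ?NegzE ?mulrNz ?nrmN nrm_natr_le1. Qed.

Lemma nrm_eq1_neq0 x : nrm x = 1 -> x != 0.
Proof. by apply: contra_eqN => /eqP->; rewrite nrm0 eq_sym oner_neq0. Qed.

Lemma nrm_eq1_close a b : nrm a = 1 -> nrm (a - b) < 1 -> nrm b = 1.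
Proof.
move=> ha hab; apply/eqP; rewrite eq_le; apply/andP; split.
  by rewrite -[b](subKr a); apply: nrmD_le; rewrite ?nrmN ?ha // ltW.
have := nrm_ultra b (a - b); rewrite addrC subrK ha le_max => /orP[] // h.
by move: hab; rewrite ltNge h.
Qed.

Lemma nrmM_le_exp (a b : K) (M : R) (j l k : nat) : 0 <= M -> (j <= l <= k)%N ->
  nrm a <= M ^+ (l - j) -> nrm b <= M ^+ (k - l) -> nrm (a * b) <= M ^+ (k - j).
Proof.
move=> M0 /andP[jl lk] ha hb; rewrite nrmM (_ : (k - j = (l - j) + (k - l))%N).
  by rewrite exprD ler_pM ?nrm_ge0.
by rewrite addnBAC // subnKC.
Qed.

Section SupDistance.
Variable n : nat.
Implicit Types A B : 'M[K]_n.

Lemma mdist_ge0 (A B : 'M[K]_n) : 0 <= mdist nrm A B.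
Proof. exact: bigmax_ge_id. Qed.

Lemma mdist_entry (A B : 'M[K]_n) i j : nrm (A i j - B i j) <= mdist nrm A B.
Proof.
apply: le_trans (le_bigmax _ _ i).
exact: le_bigmax _ (fun j => nrm (A i j - B i j)) j.
Qed.

Lemma mdist_le (A B : 'M[K]_n) a : 0 <= a ->
  (forall i j, nrm (A i j - B i j) <= a) -> mdist nrm A B <= a.
Proof. by move=> a0 h; apply: bigmax_le => // i _; apply: bigmax_le. Qed.

Lemma mdist_lt (A B : 'M[K]_n) a : 0 < a ->
  (forall i j, nrm (A i j - B i j) < a) -> mdist nrm A B < a.
Proof. by move=> a0 h; apply: bigmax_lt => // i _; apply: bigmax_lt. Qed.

Lemma mdistC (A B : 'M[K]_n) : mdist nrm A B = mdist nrm B A.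
Proof. by apply: eq_bigr => i _; apply: eq_bigr => j _; rewrite nrm_distC. Qed.

Lemma mdist_ultra (A B C : 'M[K]_n) :
  mdist nrm A C <= Num.max (mdist nrm A B) (mdist nrm B C).
Proof.
apply: mdist_le => [|i j]; first by rewrite le_max mdist_ge0.
rewrite -(subrKA (B i j)); apply: le_trans (nrm_ultra _ _) _.
by apply: le_max2; apply: mdist_entry.
Qed.

Lemma mdistxx A : mdist nrm A A = 0.
Proof.
apply/eqP; rewrite eq_le mdist_ge0 andbT.
by apply: mdist_le => // i j; rewrite subrr nrm0.
Qed.

Lemma mdist_telescope (u : nat -> 'M[K]_n) (r : nat -> R) :
  (forall k l, (k <= l)%N -> r l <= r k) ->
  (forall k, mdist nrm (u k.+1) (u k) <= r k) ->
  forall k l, (k <= l)%N -> mdist nrm (u l) (u k) <= r k.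
Proof.
move=> r_anti ur k l; have r_ge0 i : 0 <= r i := le_trans (mdist_ge0 _ _) (ur i).
elim: l => [|l IH]; rewrite leq_eqVlt => /orP[/eqP<-|kl]; rewrite ?mdistxx //.
apply: le_trans (mdist_ultra _ (u l) _) _; rewrite ge_max IH // andbT.
by apply: le_trans (ur l) (r_anti _ _ _); rewrite -ltnS.
Qed.

Definition mnorm (A : 'M[K]_n) := mdist nrm A 0.

Lemma mnorm_ge0 A : 0 <= mnorm A.
Proof. exact: mdist_ge0. Qed.

Lemma mnorm_entry A i j : nrm (A i j) <= mnorm A.
Proof. by have := mdist_entry A 0 i j; rewrite mxE subr0. Qed.

Lemma mnorm_le A a : 0 <= a -> (forall i j, nrm (A i j) <= a) -> mnorm A <= a.
Proof. by move=> a0 h; apply: mdist_le => // i j; rewrite mxE subr0. Qed.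

Lemma mnorm_lt A a : 0 < a -> (forall i j, nrm (A i j) < a) -> mnorm A < a.
Proof. by move=> a0 h; apply: mdist_lt => // i j; rewrite mxE subr0. Qed.

Lemma mnormM A B : mnorm (A *m B) <= mnorm A * mnorm B.
Proof.
apply: mnorm_le => [|i j]; first by rewrite mulr_ge0 ?mnorm_ge0.
rewrite mxE; apply: nrm_sum_le => [|l _]; first by rewrite mulr_ge0 ?mnorm_ge0.
by rewrite nrmM ler_pM ?nrm_ge0 ?mnorm_entry.
Qed.

Lemma mdist_mnorm A B : mdist nrm A B = mnorm (A - B).
Proof. by apply: eq_bigr => i _; apply: eq_bigr => j _; rewrite !mxE subr0. Qed.

End SupDistance.

Section Triangular.
Variable n : nat.
Local Notation S := (@Ttil R K nrm n).
Local Notation N := (@Nfun R K nrm n).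
Implicit Types A B Z : 'M[K]_n.

Lemma Ttil_upper A : S A -> upper A. Proof. by case. Qed.
Lemma Ttil_unit A : S A -> A \in unitmx. Proof. by case. Qed.
Lemma Ttil_diag A j : S A -> nrm (A j j) = 1. Proof. by case=> _ _ ->. Qed.

Lemma Ttil_diag_neq0 A j : S A -> A j j != 0.
Proof. by move=> hA; apply/nrm_eq1_neq0/Ttil_diag. Qed.

Lemma Ttil_invmx_diag A j : S A -> invmx A j j = (A j j)^-1.
Proof.
move=> hA; apply: invmx_upper_diag; [exact: Ttil_unit|exact: Ttil_upper|].
by move=> i; apply: Ttil_diag_neq0.
Qed.

Lemma Ttil1 : S 1%:M.
Proof. by split; [exact: unitmx1|exact: upper1|move=> j; rewrite mxE eqxx nrm1]. Qed.

Lemma Ttil_mul A B : S A -> S B -> S (A *m B).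
Proof.
move=> hA hB; have [uA uB] := (Ttil_upper hA, Ttil_upper hB); split.
- by rewrite unitmx_mul !Ttil_unit.
- exact: mulmx_upper.
- by move=> j; rewrite mulmx_upper_diag // nrmM !Ttil_diag // mulr1.
Qed.

Lemma Ttil_inv A : S A -> S (invmx A).
Proof.
move=> hA; split.
- by rewrite unitmx_inv Ttil_unit.
- apply: invmx_upper; [exact: Ttil_unit|exact: Ttil_upper|].
  by move=> j; apply: Ttil_diag_neq0.
- by move=> j; rewrite Ttil_invmx_diag // nrmV Ttil_diag // invr1.
Qed.

Lemma Nfun_ge0 A : 0 <= N A.
Proof. exact: bigmax_ge_id. Qed.

Lemma Nfun_le A M : 0 <= M -> (N A <= M) <->
  (forall j k : 'I_n, (j < k)%N -> nrm (A j k) <= M ^+ (k - j)).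
Proof.
move=> M0; split => [h j k jk|h].
  rewrite -powR_invn_le ?nrm_ge0 ?subn_gt0 //; apply: le_trans h.
  apply: le_trans (le_bigmax _ _ j).
  exact: le_bigmax_cond _ (fun k : 'I_n => powR (nrm (A j k)) (k - j)%:R^-1) jk.
apply: bigmax_le => // j _; apply: bigmax_le => // k jk.
by rewrite powR_invn_le ?nrm_ge0 ?subn_gt0 // h.
Qed.

Definition tri_bounded (M : R) (A : 'M[K]_n) :=
  forall j k : 'I_n, (j <= k)%N -> nrm (A j k) <= M ^+ (k - j).

Lemma tri_bounded_Nfun A : S A -> tri_bounded (N A) A.
Proof.
move=> hA j k; rewrite leq_eqVlt => /orP[/eqP/val_inj->|jk].
  by rewrite subnn expr0 Ttil_diag.
exact: (proj1 (Nfun_le A (Nfun_ge0 A))) (lexx _) j k jk.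
Qed.

Lemma Nfun_le_tri_bounded A M : 0 <= M -> tri_bounded M A -> N A <= M.
Proof. by move=> M0 h; apply/Nfun_le => // j k jk; apply/h/ltnW. Qed.

Lemma tri_bounded_le A M M' : tri_bounded M A -> 0 <= M -> M <= M' ->
  tri_bounded M' A.
Proof.
move=> h M0 MM' j k jk; apply: le_trans (h j k jk) _.
by rewrite lerXn2r // nnegrE (le_trans M0).
Qed.

Lemma upper_term_eq0 (A B : 'M[K]_n) (j l k : 'I_n) : upper A -> upper B ->
  ~~ (j <= l <= k)%N -> A j l * B l k = 0.
Proof.
move=> uA uB; rewrite negb_and -!ltnNge => /orP[lj|kl].
  by rewrite uA // mul0r.
by rewrite uB // mulr0.
Qed.

Lemma tri_boundedM A B M : upper A -> upper B -> 0 <= M ->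
  tri_bounded M A -> tri_bounded M B -> tri_bounded M (A *m B).
Proof.
move=> uA uB M0 bA bB j k jk; rewrite mxE; apply: nrm_sum_le => [|l _].
  exact: exprn_ge0.
have [/andP[jl lk]|out] := boolP (j <= l <= k)%N.
  by apply: (nrmM_le_exp (l := l)); rewrite ?jl ?lk ?bA ?bB.
by rewrite upper_term_eq0 // nrm0 exprn_ge0.
Qed.

(* Back-substitution in [invmx A *m A = 1]. *)
Lemma tri_boundedV A M : S A -> 0 <= M -> tri_bounded M A ->
  tri_bounded M (invmx A).
Proof.
move=> hA M0 bA; have uB := Ttil_upper (Ttil_inv hA).
suff bd d (j k : 'I_n) : (j <= k)%N -> (k - j <= d)%N ->
    nrm (invmx A j k) <= M ^+ (k - j).
  by move=> j k jk; apply: bd jk (leqnn _).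
elim: d j k => [|d IH] j k; rewrite leq_eqVlt => /orP[/eqP/val_inj<-|jk] hd.
- by rewrite subnn expr0 (Ttil_diag _ (Ttil_inv hA)).
- by move: hd; rewrite leqn0 subn_eq0 leqNgt jk.
- by rewrite subnn expr0 (Ttil_diag _ (Ttil_inv hA)).
have := congr1 (fun X : 'M_n => X j k) (mulVmx (Ttil_unit hA)).
rewrite !mxE -val_eqE ltn_eqF // (bigD1 k) //= => /eqP; rewrite addr_eq0 => /eqP e.
rewrite -[nrm _]mulr1 -(Ttil_diag k hA) -nrmM e nrmN.
apply: nrm_sum_le => [|l lNk]; first exact: exprn_ge0.
have [/andP[jl lk]|out] := boolP (j <= l <= k)%N; last first.
  by rewrite upper_term_eq0 ?nrm0 ?exprn_ge0 //; exact: Ttil_upper.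
have lk_lt : (l < k)%N.
  by rewrite ltn_neqAle lk andbT; apply: contraNneq lNk => /val_inj->.
by apply: (nrmM_le_exp (l := l)); rewrite ?jl ?lk ?bA ?IH //; lia.
Qed.

Lemma NfunM A B : S A -> S B -> N (A *m B) <= Num.max (N A) (N B).
Proof.
move=> hA hB; have M0 : 0 <= Num.max (N A) (N B) by rewrite le_max Nfun_ge0.
apply: Nfun_le_tri_bounded => //.
apply: tri_boundedM (Ttil_upper hA) (Ttil_upper hB) M0 _ _.
  by apply: tri_bounded_le (tri_bounded_Nfun hA) _ _; rewrite ?Nfun_ge0 ?le_max ?lexx.
apply: tri_bounded_le (tri_bounded_Nfun hB) _ _;
  by rewrite ?Nfun_ge0 ?le_max ?lexx ?orbT.
Qed.

Lemma NfunV A : S A -> N (invmx A) = N A.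
Proof.
have le A' : S A' -> N (invmx A') <= N A'.
  move=> hA'; apply: Nfun_le_tri_bounded; first exact: Nfun_ge0.
  exact: tri_boundedV hA' (Nfun_ge0 _) (tri_bounded_Nfun hA').
move=> hA; apply/eqP; rewrite eq_le le //=.
by rewrite -{1}(invmxK A) (le _ (Ttil_inv hA)).
Qed.

Lemma Nfun1 : N 1%:M = 0.
Proof.
apply/eqP; rewrite eq_le Nfun_ge0 andbT; apply/Nfun_le => // j k jk.
by rewrite mxE -val_eqE ltn_eqF // nrm0 expr0n subn_eq0 leqNgt jk.
Qed.

Lemma Nfun_eq0_entry A (j k : 'I_n) : N A = 0 -> (j < k)%N -> A j k = 0.
Proof.
move=> NA0 jk; have /Nfun_le/(_ j k jk) : N A <= 0 by rewrite NA0.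
rewrite lexx expr0n subn_eq0 leqNgt jk => /(_ isT) A0.
by apply/nrm_eq0/eqP; rewrite eq_le A0 nrm_ge0.
Qed.

Lemma semi_ultrametric_max (d1 d2 : 'M[K]_n -> 'M[K]_n -> R) :
  semi_ultrametric S d1 -> semi_ultrametric S d2 ->
  semi_ultrametric S (fun x y => Num.max (d1 x y) (d2 x y)).
Proof.
move=> h1 h2 x y z hx hy hz.
have [d1_ge0 d1xx d1C d1_ultra] := h1 x y z hx hy hz.
have [d2_ge0 d2xx d2C d2_ultra] := h2 x y z hx hy hz.
split; [by rewrite le_max d1_ge0 | by rewrite d1xx d2xx maxxx | by rewrite d1C d2C |].
rewrite ge_max; apply/andP; split;
  [apply: le_trans d1_ultra _|apply: le_trans d2_ultra _];
  by rewrite ge_max !le_max !lexx ?orbT.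
Qed.

Lemma dLC x y : S x -> S y -> dL nrm x y = dL nrm y x.
Proof.
move=> hx hy; rewrite /dL -NfunV ?invmxM ?invmxK ?unitmx_inv ?Ttil_unit //.
exact: Ttil_mul (Ttil_inv hy) hx.
Qed.

Lemma dRC x y : S x -> S y -> dR nrm x y = dR nrm y x.
Proof.
move=> hx hy; rewrite /dR -NfunV ?invmxM ?invmxK ?unitmx_inv ?Ttil_unit //.
exact: Ttil_mul hx (Ttil_inv hy).
Qed.

Lemma semi_ultrametric_dL : semi_ultrametric S (dL nrm).
Proof.
move=> x y z hx hy hz; split; [exact: Nfun_ge0 | | exact: dLC |].
  by rewrite /dL mulVmx ?Ttil_unit // Nfun1.
rewrite /dL -{1}(mulKVmx (Ttil_unit hy) x) (mulmxA (invmx z)) maxC.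
by apply: NfunM; apply: Ttil_mul => //; apply: Ttil_inv.
Qed.

Lemma semi_ultrametric_dR : semi_ultrametric S (dR nrm).
Proof.
move=> x y z hx hy hz; split; [exact: Nfun_ge0 | | exact: dRC |].
  by rewrite /dR mulmxV ?Ttil_unit // Nfun1.
rewrite /dR -{1}(mulmxKV (Ttil_unit hy) x) -(mulmxA (x *m invmx y)).
by apply: NfunM; apply: Ttil_mul => //; apply: Ttil_inv.
Qed.

Lemma left_invariant_dL : left_invariant S (dL nrm).
Proof.
move=> g x y hg hx hy.
by rewrite /dL invmxM ?Ttil_unit // -mulmxA mulKmx ?Ttil_unit.
Qed.

Lemma right_invariant_dR : right_invariant S (dR nrm).
Proof.
move=> g x y hg hx hy.
by rewrite /dR invmxM ?Ttil_unit // mulmxA mulmxK ?Ttil_unit.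
Qed.

Lemma Dfun_ge0 (x y : 'M[K]_n) : 0 <= Dfun nrm x y.
Proof. exact: bigmax_ge_id. Qed.

Lemma Dfun_entry (x y : 'M[K]_n) j : nrm (x j j - y j j) <= Dfun nrm x y.
Proof. exact: le_bigmax _ (fun j => nrm (x j j - y j j)) j. Qed.

Lemma semi_ultrametric_Dfun : semi_ultrametric S (Dfun nrm).
Proof.
move=> x y z hx hy hz; split.
- exact: Dfun_ge0.
- apply/eqP; rewrite eq_le Dfun_ge0 andbT.
  by apply: bigmax_le => // j _; rewrite subrr nrm0.
- by apply: eq_bigr => j _; rewrite nrm_distC.
apply: bigmax_le => [|j _]; first by rewrite le_max Dfun_ge0.
rewrite -(subrKA (y j j)); apply: le_trans (nrm_ultra _ _) _.
by apply: le_max2; apply: Dfun_entry.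
Qed.

Lemma left_invariant_Dfun : left_invariant S (Dfun nrm).
Proof.
move=> g x y hg hx hy; apply: eq_bigr => j _.
have [ug ux uy] := And3 (Ttil_upper hg) (Ttil_upper hx) (Ttil_upper hy).
by rewrite !mulmx_upper_diag // -mulrBr nrmM Ttil_diag // mul1r.
Qed.

Lemma right_invariant_Dfun : right_invariant S (Dfun nrm).
Proof.
move=> g x y hg hx hy; apply: eq_bigr => j _.
have [ug ux uy] := And3 (Ttil_upper hg) (Ttil_upper hx) (Ttil_upper hy).
by rewrite !mulmx_upper_diag // -mulrBl nrmM (Ttil_diag _ hg) mulr1.
Qed.

Lemma Dfun_mulVmx A B : S A -> S B -> Dfun nrm (invmx A *m B) 1%:M = Dfun nrm B A.
Proof.
move=> hA hB; rewrite -(mulVmx (Ttil_unit hA)).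
exact: left_invariant_Dfun (Ttil_inv hA) hB hA.
Qed.

Lemma Dfun_mulmxV A B : S A -> S B -> Dfun nrm (B *m invmx A) 1%:M = Dfun nrm B A.
Proof.
move=> hA hB; rewrite -(mulmxV (Ttil_unit hA)).
exact: right_invariant_Dfun (Ttil_inv hA) hB hA.
Qed.

Lemma Ttil_eq1 Z : S Z -> Num.max (N Z) (Dfun nrm Z 1%:M) = 0 -> Z = 1%:M.
Proof.
move=> hZ /eqP; rewrite eq_le ge_max -andbA => /and3P[NZ DZ _].
have NZ0 : N Z = 0 by apply/eqP; rewrite eq_le NZ Nfun_ge0.
apply/matrixP => j k; rewrite mxE.
case: (ltngtP j k) => [jk|kj|/val_inj<-].
- by rewrite -val_eqE ltn_eqF // Nfun_eq0_entry.
- by rewrite -val_eqE gtn_eqF // (Ttil_upper hZ).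
apply/subr0_eq/nrm_eq0/eqP; rewrite eq_le nrm_ge0 andbT (le_trans _ DZ) //.
by have := Dfun_entry Z 1%:M j; rewrite mxE eqxx.
Qed.

Lemma ultrametric_dLD :
  ultrametric S (fun A A' => Num.max (dL nrm A A') (Dfun nrm A A')).
Proof.
split.
  by apply: semi_ultrametric_max;
    [exact: semi_ultrametric_dL | exact: semi_ultrametric_Dfun].
move=> x y hx hy; rewrite /dL -(Dfun_mulVmx hy hx).
move=> /(Ttil_eq1 (Ttil_mul (Ttil_inv hy) hx)) e.
by rewrite -(mulKVmx (Ttil_unit hy) x) e mulmx1.
Qed.

Lemma left_invariant_dLD :
  left_invariant S (fun A A' => Num.max (dL nrm A A') (Dfun nrm A A')).
Proof. by move=> g x y hg hx hy; rewrite left_invariant_dL // left_invariant_Dfun. Qed.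

Lemma right_invariant_dRD :
  right_invariant S (fun A A' => Num.max (dR nrm A A') (Dfun nrm A A')).
Proof.
by move=> g x y hg hx hy; rewrite right_invariant_dR // right_invariant_Dfun.
Qed.

Lemma ultrametric_dRD :
  ultrametric S (fun A A' => Num.max (dR nrm A A') (Dfun nrm A A')).
Proof.
split.
  by apply: semi_ultrametric_max;
    [exact: semi_ultrametric_dR | exact: semi_ultrametric_Dfun].
move=> x y hx hy; rewrite /dR -(Dfun_mulmxV hy hx).
move=> /(Ttil_eq1 (Ttil_mul hx (Ttil_inv hy))) e.
by rewrite -(mulmxKV (Ttil_unit hy) x) e mul1mx.
Qed.

Lemma Dfun_le_mdist (A B : 'M[K]_n) : Dfun nrm A B <= mdist nrm A B.
Proof. by apply: bigmax_le => [|j _]; rewrite ?mdist_ge0 ?mdist_entry. Qed.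

Definition coarser_topology (d : 'M[K]_n -> 'M[K]_n -> R) :=
  forall A r, S A -> 0 < r ->
  exists2 e : R, 0 < e & forall B, S B -> mdist nrm A B < e -> d A B < r.

Definition finer_topology (d : 'M[K]_n -> 'M[K]_n -> R) :=
  forall A e, S A -> 0 < e ->
  exists2 r : R, 0 < r & forall B, S B -> d A B < r -> mdist nrm A B < e.

Lemma compatible_of_coarser d :
  semi_ultrametric S d -> coarser_topology d -> compatible nrm S d.
Proof.
move=> hd hc x r hx; split=> [A []//|A [hA hxA]].
have r0 : 0 < r.
  by have [d_ge0 _ _ _] := hd x A A hx hA hA; apply: le_lt_trans d_ge0 hxA.
have [e e0 he] := hc A r hA r0; exists e => // B hB hAB; split => //.
have [_ _ _ d_ultra] := hd x A B hx hA hB.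
by apply: le_lt_trans d_ultra _; rewrite gt_max hxA he.
Qed.

Lemma determines_topology_of d :
  coarser_topology d -> finer_topology d -> determines_topology nrm S d.
Proof.
move=> hc hf U; split=> -[US hU]; split=> // A hA.
  have [r r0 hr] := hU A hA; have [e e0 he] := hc A r (US A hA) r0.
  by exists e => // B hB hAB; apply: hr; split => //; apply: he.
have [e e0 he] := hU A hA; have [r r0 hr] := hf A e (US A hA) e0.
by exists r => // B [hB hAB]; apply: he => //; apply: hr.
Qed.

Lemma Nfun_le_mnorm_sub1 Z rho : 0 <= rho <= 1 -> mnorm (Z - 1%:M) <= rho ^+ n ->
  N Z <= rho.
Proof.
move=> /andP[rho0 rho1] hZ; apply/Nfun_le => // j k jk.
have := mnorm_entry (Z - 1%:M) j k; rewrite !mxE -val_eqE ltn_eqF // subr0 => Zjk.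
apply: le_trans Zjk (le_trans hZ _).
by apply: ler_wiXn2l => //; have := ltn_ord k; lia.
Qed.

Lemma mnorm_sub1_lt Z r : S Z -> r <= 1 ->
  Num.max (N Z) (Dfun nrm Z 1%:M) < r -> mnorm (Z - 1%:M) < r.
Proof.
move=> hZ r1; rewrite gt_max => /andP[NZ DZ].
have r0 : 0 < r := le_lt_trans (Nfun_ge0 Z) NZ.
apply: mnorm_lt => // i j; rewrite !mxE.
case: (ltngtP i j) => [ij|ji|/val_inj<-].
- rewrite -val_eqE ltn_eqF // subr0; apply: le_lt_trans (NZ).
  apply: le_trans (tri_bounded_Nfun hZ (ltnW ij)) _.
  by rewrite ler_iXnr ?subn_gt0 ?Nfun_ge0 // (le_trans (ltW NZ)).
- by rewrite -val_eqE gtn_eqF // (Ttil_upper hZ) // subr0 nrm0.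
by apply: le_lt_trans DZ; have := Dfun_entry Z 1%:M i; rewrite mxE.
Qed.

Lemma mnorm_le_Nfun Z M : S Z -> 1 <= M -> N Z <= M -> mnorm Z <= M ^+ n.
Proof.
move=> hZ M1 NZ; have M0 : 0 <= M := le_trans ler01 M1.
apply: mnorm_le => [|i j]; first exact: exprn_ge0.
case: (leqP i j) => [ij|ji]; last by rewrite (Ttil_upper hZ) // nrm0 exprn_ge0.
apply: le_trans (tri_bounded_le (tri_bounded_Nfun hZ) (Nfun_ge0 _) NZ ij) _.
by apply: ler_weXn2l => //; have := ltn_ord j; lia.
Qed.

Lemma coarser_of_near1 d :
  (forall A, S A -> exists2 c, 0 <= c & forall B, S B ->
     exists2 Z, d A B = N Z & mnorm (Z - 1%:M) <= c * mdist nrm A B) ->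
  coarser_topology d.
Proof.
move=> hd A r hA r0; have [c c0 hc] := hd A hA.
pose rho := Num.min (r / 2) 1.
have rho0 : 0 < rho by rewrite lt_min ltr01 andbT divr_gt0.
have rho1 : rho <= 1 by rewrite ge_min lexx orbT.
have rhor : rho < r by rewrite gt_min ltr_pdivrMr // ltr_pMr // ltr1n.
have c1 : 0 < c + 1 by rewrite ltr_wpDl.
exists (rho ^+ n / (c + 1)) => [|B hB]; first by rewrite divr_gt0 ?exprn_gt0.
rewrite ltr_pdivlMr // => hAB; have [Z -> hZ] := hc B hB.
apply: le_lt_trans rhor; apply: Nfun_le_mnorm_sub1; first by rewrite ltW.
by apply: le_trans hZ _; have := mdist_ge0 A B; nra.
Qed.

Lemma finer_of_near1 d :
  (forall A, S A -> exists2 c, 0 <= c & forall B, S B ->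
     exists2 Z, S Z & Num.max (N Z) (Dfun nrm Z 1%:M) <= d A B /\
                      mdist nrm A B <= c * mnorm (Z - 1%:M)) ->
  finer_topology d.
Proof.
move=> hd A e hA e0; have [c c0 hc] := hd A hA.
have c1 : 0 < c + 1 by rewrite ltr_wpDl.
exists (Num.min 1 (e / (c + 1))) => [|B hB hdAB].
  by rewrite lt_min ltr01 divr_gt0.
have [Z hZ [hZd hAB]] := hc B hB.
have r1 : Num.min 1 (e / (c + 1)) <= 1 by rewrite ge_min lexx.
have := mnorm_sub1_lt hZ r1 (le_lt_trans hZd hdAB).
rewrite lt_min ltr_pdivlMr // => /andP[_ hZ1].
by apply: le_lt_trans hAB _; have := mnorm_ge0 (Z - 1%:M); nra.
Qed.

Lemma coarser_dL : coarser_topology (dL nrm).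
Proof.
apply: coarser_of_near1 => A hA; exists (mnorm (invmx A)) => [|B hB].
  exact: mnorm_ge0.
exists (invmx A *m B); first by rewrite dLC.
by rewrite mulVmx_sub1 ?Ttil_unit // mdistC mdist_mnorm mnormM.
Qed.

Lemma coarser_dR : coarser_topology (dR nrm).
Proof.
apply: coarser_of_near1 => A hA; exists (mnorm (invmx A)) => [|B hB].
  exact: mnorm_ge0.
exists (B *m invmx A); first by rewrite dRC.
by rewrite mulmxV_sub1 ?Ttil_unit // mdistC mdist_mnorm mulrC mnormM.
Qed.

Lemma coarser_max_Dfun d :
  coarser_topology d -> coarser_topology (fun A A' => Num.max (d A A') (Dfun nrm A A')).
Proof.
move=> hc A r hA r0; have [e e0 he] := hc A r hA r0.
exists (Num.min e r) => [|B hB]; first by rewrite lt_min e0.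
rewrite lt_min => /andP[h1 h2].
by rewrite gt_max he // (le_lt_trans (Dfun_le_mdist _ _)).
Qed.

Lemma finer_dLD : finer_topology (fun A A' => Num.max (dL nrm A A') (Dfun nrm A A')).
Proof.
apply: finer_of_near1 => A hA; exists (mnorm A) => [|B hB]; first exact: mnorm_ge0.
exists (invmx A *m B); first exact: Ttil_mul (Ttil_inv hA) hB.
rewrite Dfun_mulVmx // mulVmx_sub1 ?Ttil_unit //; split.
  by rewrite dLC //; have [_ _ -> _] := semi_ultrametric_Dfun hB hA hA.
by rewrite mdistC mdist_mnorm -{1}(mulKVmx (Ttil_unit hA) (B - A)) mnormM.
Qed.

Lemma finer_dRD : finer_topology (fun A A' => Num.max (dR nrm A A') (Dfun nrm A A')).
Proof.
apply: finer_of_near1 => A hA; exists (mnorm A) => [|B hB]; first exact: mnorm_ge0.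
exists (B *m invmx A); first exact: Ttil_mul hB (Ttil_inv hA).
rewrite Dfun_mulmxV // mulmxV_sub1 ?Ttil_unit //; split.
  by rewrite dRC //; have [_ _ -> _] := semi_ultrametric_Dfun hB hA hA.
rewrite mdistC mdist_mnorm -{1}(mulmxKV (Ttil_unit hA) (B - A)) mulrC.
exact: mnormM.
Qed.

Lemma Nfun_le_dL A B : S A -> S B -> N B <= Num.max (N A) (dL nrm A B).
Proof.
move=> hA hB; rewrite dLC // /dL -{1}(mulKVmx (Ttil_unit hA) B).
by apply: NfunM => //; apply: Ttil_mul => //; apply: Ttil_inv.
Qed.

Definition Nball (M : R) : mset K n := fun A => S A /\ N A <= M.

Lemma subgroup_Nball M : 0 <= M -> subgroup_of S (Nball M).
Proof.
move=> M0; split=> [A []//| |A B [hA NA] [hB NB]|A [hA NA]].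
- by split; [exact: Ttil1 | rewrite Nfun1].
- by split; [exact: Ttil_mul | rewrite (le_trans (NfunM hA hB)) // ge_max NA].
- by split; [exact: Ttil_inv | rewrite NfunV].
Qed.

Lemma open_Nball M : 0 < M -> open_in nrm S (Nball M).
Proof.
move=> M0; split=> [A []//|A [hA NA]].
have [e e0 he] := coarser_dL hA M0; exists e => // B hB hAB; split => //.
by apply: le_trans (Nfun_le_dL hA hB) _; rewrite ge_max NA ltW // he.
Qed.

Lemma closed_Nball M : 0 <= M -> closed_in nrm S (Nball M).
Proof.
move=> M0; split=> [A []//|]; split=> [A []//|A [hA notNA]].
have MNA : M < N A by rewrite ltNge; apply/negP => NA; apply: notNA.
have [e e0 he] := coarser_dL hA (le_lt_trans M0 MNA).
exists e => // B hB hAB; split=> // -[_ NB].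
have := Nfun_le_dL hB hA; rewrite dLC // le_max => /orP[] h.
  by move: MNA; rewrite ltNge (le_trans h NB).
by move: (he B hB hAB); rewrite ltNge h.
Qed.

End Triangular.

Section Padic.
Variable p : nat.
Hypotheses (p_prime : prime p)
  (nrm_ratr : forall q : rat, nrm (ratr q) = padic_abs R p q)
  (nrm_complete : forall u : nat -> K,
    (forall e : R, 0 < e -> exists N, forall m k, (N <= m)%N -> (N <= k)%N ->
       nrm (u m - u k) < e) ->
    exists l, forall e : R, 0 < e -> exists N, forall m, (N <= m)%N ->
       nrm (u m - l) < e)
  (nrm_dense : forall (x : K) (e : R), 0 < e -> exists q : rat, nrm (x - ratr q) < e).

Lemma pR_gt1 : 1 < p%:R :> R.
Proof. by rewrite ltr1n prime_gt1. Qed.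

Lemma pR_gt0 : 0 < p%:R :> R.
Proof. exact: lt_trans pR_gt1. Qed.

Lemma pinv_lt1 : p%:R^-1 < 1 :> R.
Proof. by rewrite invf_lt1 ?pR_gt1 ?pR_gt0. Qed.

Lemma nrm_natr_p : nrm p%:R = p%:R^-1.
Proof.
have := nrm_ratr p%:R; rewrite ratr_nat => ->.
rewrite /padic_abs pnatr_eq0 gtn_eqF ?prime_gt0 //.
rewrite /padic_val (_ : p%:R = (Posz p)%:Q) // numq_int denq_int /= logn1.
by rewrite (_ : logn p p = 1%N) ?subr0 ?exprN1 // -{2}[p]expn1 pfactorK.
Qed.

Lemma natr_p_neq0 : p%:R != 0 :> K.
Proof.
apply/eqP => p0; have := nrm_natr_p; rewrite p0 nrm0 => /eqP.
by rewrite eq_sym invr_eq0 gt_eqF ?pR_gt0.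
Qed.

Lemma nrm_pexp k : nrm (p%:R ^+ k) = (p%:R ^+ k)^-1.
Proof. by rewrite nrmX nrm_natr_p exprVn. Qed.

Lemma nrm_pexp_antitone (a : K) k l : (k <= l)%N ->
  nrm (a * p%:R ^+ l) <= nrm (a * p%:R ^+ k).
Proof.
move=> kl; rewrite !nrmM !nrm_pexp; apply: ler_wpM2l; first exact: nrm_ge0.
by rewrite lef_pV2 ?posrE ?exprn_gt0 ?pR_gt0 // ler_weXn2l // ltW ?pR_gt1.
Qed.

Lemma pexp_gt (x : R) : exists k, x < p%:R ^+ k.
Proof.
have x0 : 0 <= Num.max x 0 by rewrite le_max lexx orbT.
exists (Num.Def.archi_bound (Num.max x 0)).
apply: le_lt_trans (_ : x <= Num.max x 0) _; first by rewrite le_max lexx.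
by apply: lt_trans (archi_boundP x0) _; rewrite -natrX ltr_nat ltn_expl ?prime_gt1.
Qed.

Lemma nrm_pexp_small (a : K) e : 0 < e -> exists k, nrm (a * p%:R ^+ k) < e.
Proof.
move=> e0; have [k hk] := pexp_gt (nrm a / e); exists k.
by rewrite nrmM nrm_pexp ltr_pdivrMr ?exprn_gt0 ?pR_gt0 // -ltr_pdivrMl // mulrC.
Qed.

Lemma nrm_intr_gt0 (z : int) : z != 0 -> 0 < nrm z%:~R.
Proof.
move=> z0; rewrite -ratr_int nrm_ratr /padic_abs intr_eq0 (negPf z0).
exact: exprz_gt0 pR_gt0.
Qed.

Lemma nrm_intr_dvdp (z : int) : (p %| `|z|)%N -> nrm z%:~R <= p%:R^-1.
Proof.
move=> /dvdnP[t zt].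
rewrite (_ : z = Num.sg z * (t%:Z * p%:Z)); last by rewrite -PoszM -zt -numEsg.
rewrite !intrM !nrmM -[(Posz p)%:~R]/(p%:R) nrm_natr_p mulrA -[leRHS]mul1r.
rewrite ler_wpM2r ?invr_ge0 ?ler0n //.
by apply: mulr_ile1; rewrite ?nrm_ge0 ?nrm_intr_le1.
Qed.

(* Bezout: [u z + v p = 1] with [|v p| < 1] forces [|u z| = 1]. *)
Lemma nrm_intr_ndvdp (z : int) : ~~ (p %| `|z|)%N -> nrm z%:~R = 1.
Proof.
move=> pNz; have cz : coprimez z p by rewrite coprimezE coprime_sym prime_coprime.
have [u [v]] := Bezoutz z p; rewrite (eqP cz) => uv.
have e : (u%:~R * z%:~R + v%:~R * p%:R : K) = 1.
  by rewrite (_ : p%:R = (Posz p)%:~R) // -!intrM -intrD uv.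
have vp_lt1 : nrm (v%:~R * p%:R : K) < 1.
  rewrite nrmM nrm_natr_p; apply: le_lt_trans pinv_lt1.
  by rewrite ler_piMl ?invr_ge0 ?ler0n ?nrm_intr_le1.
have uz1 : nrm (u%:~R * z%:~R : K) = 1.
  apply: nrm_eq1_close nrm1 _.
  by rewrite (_ : 1 - _ = v%:~R * p%:R) //; apply/eqP; rewrite subr_eq addrC e.
apply/eqP; rewrite eq_le nrm_intr_le1 -{1}uz1 nrmM.
by rewrite ler_piMl ?nrm_ge0 ?nrm_intr_le1.
Qed.

Lemma ndvdp_denq q : nrm (ratr q) <= 1 -> ~~ (p %| `|denq q|)%N.
Proof.
move=> hq; apply/negP => pd.
have pNa : ~~ (p %| `|numq q|)%N.
  apply/negP => pa; have := coprime_num_den q; rewrite /coprime => /eqP cop.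
  have : (p %| gcdn `|numq q| `|denq q|)%N by rewrite dvdn_gcd pa pd.
  by rewrite cop dvdn1 => /eqP p1; move: p_prime; rewrite p1.
have d_gt0 := nrm_intr_gt0 (denq_neq0 q).
move: hq; rewrite [ratr q]/(_ / _) nrmM nrmV nrm_intr_ndvdp // mul1r.
rewrite invf_le1 // => d_ge1.
have := le_trans d_ge1 (nrm_intr_dvdp pd).
by rewrite invf_ge1 ?pR_gt0 // leNgt pR_gt1.
Qed.

Lemma residue_rat q : nrm (ratr q) <= 1 ->
  exists i : 'I_p, nrm (ratr q - i%:R) <= p%:R^-1.
Proof.
move=> hq; set a := numq q; set d := denq q.
have pNd : ~~ (p %| `|d|)%N := ndvdp_denq hq.
have d0 : d%:~R != 0 :> K := nrm_eq1_neq0 (nrm_intr_ndvdp pNd).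
have cz : coprimez d p by rewrite coprimezE coprime_sym prime_coprime.
have [u [v]] := Bezoutz d p; rewrite (eqP cz) => uv.
have p0 : p%:Z != 0 by rewrite eqz_nat gtn_eqF ?prime_gt0.
set i := ((a * u) %% p)%Z; set w := ((a * u) %/ p)%Z.
have i0 : 0 <= i by rewrite modz_ge0.
have ip : (`|i| < p)%N by rewrite -ltz_nat gez0_abs // ltz_pmod // ltz_nat prime_gt0.
exists (Ordinal ip).
have ai : a - i * d = (a * v + w * d) * p.
  have -> : i = a * u - w * p.
    by rewrite [a * u](divz_eq _ p) -/w -/i addrAC subrr add0r.
  rewrite {1}(_ : a = a * (u * d + v * p)); last by rewrite uv mulr1.
  ring.
have -> : ratr q - (Ordinal ip)%:R = (a - i * d)%:~R / d%:~R :> K.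
  rewrite -[(Ordinal ip)%:R]/((Posz `|i|)%:~R) gez0_abs // intrB intrM mulrBl.
  by rewrite -mulrA mulfV // mulr1.
rewrite nrmM nrmV (nrm_intr_ndvdp pNd) invr1 mulr1 ai.
by apply: nrm_intr_dvdp; rewrite abszM dvdn_mull.
Qed.

Lemma residue x : nrm x <= 1 -> exists i : 'I_p, nrm (x - i%:R) <= p%:R^-1.
Proof.
move=> hx; have pinv_gt0 : 0 < p%:R^-1 :> R by rewrite invr_gt0 pR_gt0.
have [q hq] := nrm_dense x pinv_gt0.
have q1 : nrm (ratr q : K) <= 1.
  rewrite -[ratr q](subKr x); apply: nrmD_le => //.
  by rewrite nrmN ltW // (lt_trans hq pinv_lt1).
have [i hi] := residue_rat q1; exists i.
by rewrite -(subrKA (ratr q)); apply: nrmD_le => //; rewrite ltW.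
Qed.

Section Compact.
Variable n : nat.
Local Notation S := (@Ttil R K nrm n).
Implicit Types A B C L : 'M[K]_n.

(* A ball of radius [|lam|] is covered by the [p ^ (n * n)] balls of radius
   [|lam p|] centred at [c + lam T], [T] a matrix of digits. *)
Definition digit_mx (T : {ffun 'I_n * 'I_n -> 'I_p}) : 'M[K]_n :=
  \matrix_(i, j) (T (i, j))%:R.

Lemma mdist_digit c lam T : mdist nrm (c + lam *: digit_mx T) c <= nrm lam.
Proof.
rewrite mdist_mnorm addrAC subrr add0r.
apply: mnorm_le => [|i j]; first exact: nrm_ge0.
by rewrite !mxE nrmM ler_piMr ?nrm_ge0 ?nrm_natr_le1.
Qed.

Lemma mdist_split c lam A : lam != 0 -> mdist nrm A c <= nrm lam ->
  exists T, mdist nrm A (c + lam *: digit_mx T) <= nrm (lam * p%:R).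
Proof.
move=> lam0 hA.
have digit ij : exists t : 'I_p,
    nrm (A ij.1 ij.2 - c ij.1 ij.2 - lam * t%:R) <= nrm (lam * p%:R).
  have y1 : nrm ((A ij.1 ij.2 - c ij.1 ij.2) / lam) <= 1.
    by rewrite nrmM nrmV ler_pdivrMr ?nrm_gt0 // mul1r (le_trans (mdist_entry _ _ _ _)).
  have [t ht] := residue y1; exists t.
  rewrite -[X in X - _](mulKf lam0) mulrCA -mulrBr !nrmM nrm_natr_p.
  by apply: ler_wpM2l; rewrite ?nrm_ge0 // mulrC.
have [T hT] := fin_all_exists digit; exists (finfun T).
apply: mdist_le => [|i j]; first exact: nrm_ge0.
by rewrite !mxE ffunE opprD addrA; apply: hT (i, j).
Qed.

Lemma uncovered_split I (U : I -> mset K n) (C : mset K n) c lam : lam != 0 ->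
  ~ fcover U (fun A => C A /\ mdist nrm A c <= nrm lam) ->
  exists T, ~ fcover U (fun A =>
    C A /\ mdist nrm A (c + lam *: digit_mx T) <= nrm (lam * p%:R)).
Proof.
move=> lam0 nC; apply: Classical_Prop.NNPP => allC; apply: nC.
apply: (@fcover_sub _ _ _ _ (fun A => exists2 T, T \in enum {ffun 'I_n * 'I_n -> 'I_p} &
          C A /\ mdist nrm A (c + lam *: digit_mx T) <= nrm (lam * p%:R))).
  by move=> A [CA /(mdist_split lam0)[T hT]]; exists T; rewrite ?mem_enum.
apply: fcover_bigcup => T _; apply: Classical_Prop.NNPP => nT.
by apply: allC; exists T.
Qed.

Lemma uncovered_nested I (U : I -> mset K n) (C : mset K n) lam : lam != 0 ->
  (forall A, C A -> mnorm A <= nrm lam) -> ~ fcover U C ->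
  exists u : nat -> 'M[K]_n, forall k,
    ~ fcover U (fun A => C A /\ mdist nrm A (u k) <= nrm (lam * p%:R ^+ k)) /\
    mdist nrm (u k.+1) (u k) <= nrm (lam * p%:R ^+ k).
Proof.
move=> lam0 Cb nC.
have pk0 k : lam * p%:R ^+ k != 0.
  by rewrite mulf_neq0 // expf_neq0 // natr_p_neq0.
apply: (@dependent_choice _
  (fun k c => ~ fcover U (fun A => C A /\ mdist nrm A c <= nrm (lam * p%:R ^+ k)))
  (fun k c c' => mdist nrm c' c <= nrm (lam * p%:R ^+ k)) 0).
  apply: contra_not nC; apply: fcover_sub => A CA.
  by rewrite expr0 mulr1 -/(mnorm A) Cb.
move=> k c /(uncovered_split (pk0 k))[T hT]; exists (c + lam * p%:R ^+ k *: digit_mx T).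
  by rewrite exprSr mulrA.
exact: mdist_digit.
Qed.

Lemma mx_cauchy_limit (u : nat -> 'M[K]_n) (r : nat -> R) :
  (forall k l, (k <= l)%N -> mdist nrm (u l) (u k) <= r k) ->
  (forall e, 0 < e -> exists k, r k < e) ->
  exists L, forall k, mdist nrm L (u k) <= r k.
Proof.
move=> ur r_small.
have u_close k l m : (k <= l)%N -> (k <= m)%N -> forall i j, nrm (u l i j - u m i j) <= r k.
  move=> kl km i j; rewrite -(subrKA (u k i j)); apply: nrmD_le.
    exact: le_trans (mdist_entry _ _ i j) (ur _ _ kl).
  by rewrite nrm_distC; apply: le_trans (mdist_entry _ _ i j) (ur _ _ km).
have lim (ij : 'I_n * 'I_n) : exists l, forall e, 0 < e ->
    exists N, forall m, (N <= m)%N -> nrm (u m ij.1 ij.2 - l) < e.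
  apply: nrm_complete => e e0; have [k rk] := r_small e e0.
  by exists k => l m kl km; apply: le_lt_trans (u_close k l m kl km _ _) rk.
have [Lf hLf] := fin_all_exists lim; exists (\matrix_(i, j) Lf (i, j)) => k.
have rk0 : 0 <= r k := le_trans (mdist_ge0 _ _) (ur k k (leqnn k)).
apply: mdist_le => // i j; rewrite mxE; apply: le_max_eps => // e e0.
have [N hN] := hLf (i, j) e e0; set m := maxn N k.
rewrite -(subrKA (u m i j)); apply: le_trans (nrm_ultra _ _) _; rewrite maxC.
apply: le_max2; first exact: u_close (leq_maxr N k) (leqnn k) i j.
by rewrite nrm_distC ltW // hN // leq_maxl.
Qed.

Lemma Ttil_of_limit L : (forall e, 0 < e -> exists2 X, S X & mdist nrm L X < e) -> S L.
Proof.
move=> near.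
have uL : upper L.
  move=> j k kj; apply/nrm_eq0/eqP; rewrite eq_le nrm_ge0 andbT.
  apply: le_max_eps (lexx 0) _ => e e0; have [X hX LX] := near e e0.
  have := mdist_entry L X j k; rewrite (Ttil_upper hX) // subr0 => /le_lt_trans/(_ LX).
  by rewrite le_max => /ltW->; rewrite orbT.
have dL j : nrm (L j j) = 1.
  have [X hX LX] := near 1 ltr01; apply: nrm_eq1_close (Ttil_diag j hX) _.
  by rewrite nrm_distC; apply: le_lt_trans (mdist_entry _ _ j j) LX.
split=> //; apply: unitmx_upper => // j; exact: nrm_eq1_neq0.
Qed.

Lemma closed_in_of_limit (C : mset K n) L : closed_in nrm S C -> S L ->
  (forall e, 0 < e -> exists2 X, C X & mdist nrm L X < e) -> C L.
Proof.
move=> [CS [_ hO]] hL near; apply: Classical_Prop.NNPP => nCL.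
have [e e0 he] := hO L (conj hL nCL); have [X CX LX] := near e e0.
by case: (he X (CS X CX) LX).
Qed.

(* Subdivision argument: if [C] had no finite subcover, nested balls of
   radii [p ^ (m - k)] would each meet [C] without finite subcover, and
   their centres would converge to a point of [C] lying in some [U i]. *)
Lemma compact_of_closed_bounded (C : mset K n) b : closed_in nrm S C ->
  (forall A, C A -> mnorm A <= b) -> compact_in nrm S C.
Proof.
move=> hC Cb; have CS : forall A, C A -> S A by case: hC.
split=> // I U hU hcov; apply: Classical_Prop.NNPP => nC.
have [m bm] := pexp_gt b; pose lam : K := (p%:R ^+ m)^-1.
have lam0 : lam != 0 by rewrite invr_eq0 expf_neq0 ?natr_p_neq0.
have Clam A : C A -> mnorm A <= nrm lam.
  by move=> CA; rewrite nrmV nrm_pexp invrK (le_trans (Cb A CA)) ?ltW.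
have [u hu] := uncovered_nested lam0 Clam nC.
have [L hL] : exists L, forall k, mdist nrm L (u k) <= nrm (lam * p%:R ^+ k).
  apply: mx_cauchy_limit (fun e => nrm_pexp_small lam (e:=e)).
  apply: mdist_telescope => [k l|k]; first exact: nrm_pexp_antitone.
  exact: proj2 (hu k).
have near_ball k A : mdist nrm A (u k) <= nrm (lam * p%:R ^+ k) ->
    mdist nrm L A <= nrm (lam * p%:R ^+ k).
  move=> uA; apply: le_trans (mdist_ultra _ (u k) _) _.
  by rewrite ge_max hL mdistC.
have near e : 0 < e -> exists2 X, C X & mdist nrm L X < e.
  move=> e0; have [k rk] := nrm_pexp_small lam e0.
  have [X [CX uX]] : exists X, C X /\ mdist nrm X (u k) <= nrm (lam * p%:R ^+ k).
    apply: Classical_Prop.NNPP => nX; apply: (proj1 (hu k)).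
    by apply: fcover0 => A hA; apply: nX; exists A.
  by exists X => //; apply: le_lt_trans (near_ball k X uX) rk.
have LC : C L.
  apply: closed_in_of_limit hC _ (near); apply: Ttil_of_limit => e /near[X CX LX].
  by exists X; first exact: CS.
have [i Ui] := hcov L LC; have [e e0 he] := proj2 (hU i) L Ui.
have [k rk] := nrm_pexp_small lam e0.
apply: (proj1 (hu k)); exists 1%N, (fun _ => i) => A [CA uA]; exists ord0.
exact: he (CS A CA) (le_lt_trans (near_ball k A uA) rk).
Qed.

Lemma proper_dL : proper_sm nrm S (dL nrm).
Proof.
move=> C hC [x [r [hx xr]]].
apply: (compact_of_closed_bounded (b := mnorm x * Num.max 1 r ^+ n)) => // y /xr[hy xy].
have hZ : S (invmx x *m y) := Ttil_mul (Ttil_inv hx) hy.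
rewrite -(mulKVmx (Ttil_unit hx) y); apply: le_trans (mnormM _ _) _.
apply: ler_wpM2l; first exact: mnorm_ge0.
apply: mnorm_le_Nfun hZ _ _; first by rewrite le_max lexx.
by rewrite -[Nfun _ _]/(dL nrm y x) dLC // le_max (ltW xy) orbT.
Qed.

Lemma proper_dR : proper_sm nrm S (dR nrm).
Proof.
move=> C hC [x [r [hx xr]]].
apply: (compact_of_closed_bounded (b := Num.max 1 r ^+ n * mnorm x)) => // y /xr[hy xy].
have hZ : S (y *m invmx x) := Ttil_mul hy (Ttil_inv hx).
rewrite -(mulmxKV (Ttil_unit hx) y); apply: le_trans (mnormM _ _) _.
apply: ler_wpM2r; first exact: mnorm_ge0.
apply: mnorm_le_Nfun hZ _ _; first by rewrite le_max lexx.
by rewrite -[Nfun _ _]/(dR nrm y x) dRC // le_max (ltW xy) orbT.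
Qed.

Lemma compact_Nball (M : R) : 1 <= M -> compact_in nrm S (Nball M).
Proof.
move=> M1; have M0 : 0 <= M := le_trans ler01 M1.
apply: (compact_of_closed_bounded (b := M ^+ n)); first exact: closed_Nball.
by move=> A [hA NA]; apply: mnorm_le_Nfun.
Qed.

(* A compact set is covered by the open sets [Nball (k + 1)], hence by one of them. *)
Lemma large_compact_open_subgroups_Ttil : large_compact_open_subgroups nrm S.
Proof.
move=> C [CS Ccomp].
have Ccov A : C A -> exists k : nat, Nball k.+1%:R A.
  move=> CA; have NA0 := Nfun_ge0 A; exists (Num.Def.archi_bound (Nfun nrm A)).
  by split; [exact: CS | rewrite ltW // (lt_le_trans (archi_boundP NA0)) // ler_nat].
have [m [f hf]] := Ccomp nat (fun k => Nball k.+1%:R)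
  (fun k => open_Nball n (ltr0Sn _ _)) Ccov.
pose M : R := (\max_(j < m) f j).+1%:R.
have M1 : 1 <= M by rewrite ler1n.
exists (Nball M); split.
- exact/subgroup_Nball/(le_trans ler01 M1).
- exact/open_Nball/(lt_le_trans ltr01 M1).
- exact: compact_Nball.
move=> A /hf[j [hA NA]]; split => //; apply: le_trans NA _.
by rewrite ler_nat ltnS (leq_bigmax_cond _ isT : f j <= _)%N.
Qed.

End Compact.
End Padic.
End NonArchimedean.

Theorem mainTheorem12 (p : nat) (R : realType) (K : fieldType) (nrm : K -> R)
  (n : nat) :
  prime p -> is_Qp p nrm -> (0 < n)%N ->
  let S : mset K n := Ttil nrm in
  let dLD := fun A A' : 'M[K]_n => Num.max (dL nrm A A') (Dfun nrm A A') in
  let dRD := fun A A' : 'M[K]_n => Num.max (dR nrm A A') (Dfun nrm A A') in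
  ((forall A A', S A -> S A' ->
      Nfun nrm (A *m A') <= Num.max (Nfun nrm A) (Nfun nrm A')) /\
   (forall A, S A -> Nfun nrm (invmx A) = Nfun nrm A)) /\
  [/\ semi_ultrametric S (dL nrm), left_invariant S (dL nrm),
      compatible nrm S (dL nrm) & proper_sm nrm S (dL nrm)] /\
  [/\ semi_ultrametric S (dR nrm), right_invariant S (dR nrm),
      compatible nrm S (dR nrm) & proper_sm nrm S (dR nrm)] /\
  large_compact_open_subgroups nrm S /\
  [/\ semi_ultrametric S (Dfun nrm), left_invariant S (Dfun nrm)
      & right_invariant S (Dfun nrm)] /\
  [/\ ultrametric S dLD, left_invariant S dLD & determines_topology nrm S dLD] /\
  [/\ ultrametric S dRD, right_invariant S dRD & determines_topology nrm S dRD].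
Proof.
move=> p_prime HQ _ S dLD dRD; have nrmP := is_Qp_nonarch HQ.
have [[_ _ _ _ nrm_ratr] [nrm_complete nrm_dense]] := HQ.
have properL := proper_dL nrmP p_prime nrm_ratr nrm_complete nrm_dense (n := n).
have properR := proper_dR nrmP p_prime nrm_ratr nrm_complete nrm_dense (n := n).
have lcos := large_compact_open_subgroups_Ttil nrmP p_prime nrm_ratr nrm_complete
  nrm_dense (n := n).
split; first by split=> *; [apply: NfunM | apply: NfunV].
split.
  split; [by apply: semi_ultrametric_dL | by apply: left_invariant_dL | | by []].
  by apply: compatible_of_coarser; [apply: semi_ultrametric_dL | apply: coarser_dL].
split.
  split; [by apply: semi_ultrametric_dR | by apply: right_invariant_dR | | by []].
  by apply: compatible_of_coarser; [apply: semi_ultrametric_dR | apply: coarser_dR].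
split; first by [].
split.
  by split; [apply: semi_ultrametric_Dfun | apply: left_invariant_Dfun
            | apply: right_invariant_Dfun].
split; split; [by apply: ultrametric_dLD | by apply: left_invariant_dLD | |
               by apply: ultrametric_dRD | by apply: right_invariant_dRD |].
  apply: determines_topology_of; last by apply: finer_dLD.
  by apply: coarser_max_Dfun; apply: coarser_dL.
apply: determines_topology_of; last by apply: finer_dRD.
by apply: coarser_max_Dfun; apply: coarser_dR.
Qed.
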